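(* Let $R = \mathbb{Z} \times \mathbb{Z}$ with coordinatewise addition and multiplication $(a,b)\cdot(c,d) = (ac, ad+bc)$, and consider the template $(\mathbb{Z}^+ \times \mathbb{N}, \mathbb{N}^2, \mathbb{N}^2)$ in $R$. Suppose $a_1, a_2 \in \mathbb{Z}^+$ are coprime, $b \in \mathbb{N}$, $\alpha_1 = (a_1, 0)$ and $\alpha_2 = (a_2, b)$. Then \[ \mathrm{Frob}(\alpha_1, \alpha_2) = \left(\chi(a_1,a_2),\ \chi(a_1,a_2) + b(a_1 - 1)\right) + \mathbb{N}^2. \]
   Context: $\mathbb{N}$ denotes the nonnegative integers, $\mathbb{Z}^+ = \mathbb{N}\setminus\{0\}$. For coprime positive integers $a_1,a_2$, $\chi(a_1,a_2)$ denotes the least $w \in \mathbb{N}$ such that $w + \mathbb{N} \subseteq \{\lambda_1 a_1 + \lambda_2 a_2 : \lambda_1,\lambda_2 \in \mathbb{N}\}$; it equals $(a_1-1)(a_2-1)$. For the template above, $MN(\alpha_1, \alpha_2) = \{\alpha_1\lambda_1 + \alpha_2\lambda_2 : \lambda_1,\lambda_2 \in \mathbb{N}^2\} = \{(a_1c_1 + a_2c_2,\ a_1d_1 + a_2d_2 + bc_2) : c_1,c_2,d_1,d_2 \in \mathbb{N}\}$, and $\mathrm{Frob}(\alpha_1, \alpha_2) = \{w \in R : w + \mathbb{N}^2 \subseteq MN(\alpha_1, \alpha_2)\}$. *)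

From Stdlib Require Import ZArith Lia.
Open Scope Z_scope.

Definition RZ : Type := (Z * Z)%type.
Definition radd (x y : RZ) : RZ := (fst x + fst y, snd x + snd y).
Definition rmul (x y : RZ) : RZ :=
  (fst x * fst y, fst x * snd y + snd x * fst y).

Definition inN2 (x : RZ) : Prop := 0 <= fst x /\ 0 <= snd x.

Definition MN (al1 al2 : RZ) (w : RZ) : Prop :=
  exists l1 l2 : RZ, inN2 l1 /\ inN2 l2 /\ w = radd (rmul al1 l1) (rmul al2 l2).

Definition Frob (al1 al2 : RZ) (w : RZ) : Prop :=
  forall n : RZ, inN2 n -> MN al1 al2 (radd w n).

Definition NS2 (a1 a2 : Z) (v : Z) : Prop :=
  exists l1 l2 : Z, 0 <= l1 /\ 0 <= l2 /\ v = l1 * a1 + l2 * a2.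

Definition conductor_bound (a1 a2 w : Z) : Prop :=
  forall v, w <= v -> NS2 a1 a2 v.

Definition is_chi (a1 a2 c : Z) : Prop :=
  0 <= c /\ conductor_bound a1 a2 c /\
  (forall w, 0 <= w -> conductor_bound a1 a2 w -> c <= w).

(* A point (x, y) lies in MN((a1,0),(a2,b)) exactly when x = c1 a1 + c2 a2 with
   c1, c2 >= 0 and y - b c2 lies in the numerical semigroup <a1, a2>.  Reducing
   c2 modulo a1 shows that every point of (chi, chi + b (a1 - 1)) + N^2 is
   reached.  Conversely, by coprimality any representation of
   x = k a1 + (a1 - 1) a2 has c2 = (a1 - 1) + t a1 with t >= 0, so the point
   (x, chi - 1 + b (a1 - 1)) would put the gap chi - 1 into <a1, a2>. *)
From Stdlib Require Import ZArith Lia.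
Open Scope Z_scope.

Lemma NS2_nonneg (a1 a2 v : Z) : 0 <= a1 -> 0 <= a2 -> NS2 a1 a2 v -> 0 <= v.
Proof. intros h1 h2 [l1 [l2 [hl1 [hl2 ->]]]]. nia. Qed.

Lemma NS2_add_mull (a1 a2 v k : Z) : 0 <= k -> NS2 a1 a2 v -> NS2 a1 a2 (v + k * a1).
Proof.
  intros hk [l1 [l2 [hl1 [hl2 ->]]]].
  exists (l1 + k), l2. repeat split; lia.
Qed.

Lemma NS2_reduced_repr (a1 a2 x : Z) : 0 < a1 -> 0 <= a2 -> NS2 a1 a2 x ->
  exists c1 c2, 0 <= c1 /\ 0 <= c2 < a1 /\ x = c1 * a1 + c2 * a2.
Proof.
  intros h1 h2 [l1 [l2 [hl1 [hl2 ->]]]].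
  exists (l1 + l2 / a1 * a2), (l2 mod a1).
  pose proof (Z.div_mod l2 a1 ltac:(lia)).
  pose proof (Z.mod_pos_bound l2 a1 h1).
  pose proof (Z.div_pos l2 a1 hl2 h1).
  repeat split; nia.
Qed.

Lemma coprime_repr_congr (a1 a2 c1 c2 k r : Z) : Z.gcd a1 a2 = 1 ->
  c1 * a1 + c2 * a2 = k * a1 + r * a2 -> (a1 | c2 - r).
Proof.
  intros hg e. apply Z.gauss with a2; [|exact hg].
  exists (k - c1). lia.
Qed.

Section IsChi.

Variables a1 a2 c : Z.
Hypotheses (a1_gt0 : 0 < a1) (a2_gt0 : 0 < a2) (chi_c : is_chi a1 a2 c).

Lemma is_chi_conductor (v : Z) : c <= v -> NS2 a1 a2 v.
Proof. destruct chi_c as [_ [hcb _]]. exact (hcb v). Qed.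

Lemma is_chi_least (w : Z) : 0 <= w -> conductor_bound a1 a2 w -> c <= w.
Proof. destruct chi_c as [_ [_ hmin]]. exact (hmin w). Qed.

Lemma is_chi_gap : ~ NS2 a1 a2 (c - 1).
Proof.
  intros hgap.
  assert (hc1 : 0 <= c - 1) by (apply (NS2_nonneg a1 a2); auto; lia).
  enough (c <= c - 1) by lia.
  apply is_chi_least; [exact hc1|].
  intros v hv. destruct (Z.eq_dec v (c - 1)) as [->|hne]; [exact hgap|].
  apply is_chi_conductor. lia.
Qed.

End IsChi.

Lemma MN_iff (a1 a2 b x y : Z) :
  MN (a1, 0) (a2, b) (x, y) <->
  exists c1 c2, 0 <= c1 /\ 0 <= c2 /\ x = c1 * a1 + c2 * a2 /\ NS2 a1 a2 (y - b * c2).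
Proof.
  unfold MN, inN2, radd, rmul; simpl. split.
  - intros [[c1 d1] [[c2 d2] [[hc1 hd1] [[hc2 hd2] e]]]]; simpl in *.
    injection e as ex ey.
    exists c1, c2. repeat split; try lia.
    exists d1, d2. repeat split; lia.
  - intros [c1 [c2 [hc1 [hc2 [ex [d1 [d2 [hd1 [hd2 ey]]]]]]]]].
    exists (c1, d1), (c2, d2); simpl. repeat split; try lia.
    f_equal; lia.
Qed.

Lemma MN_fst_NS2 (a1 a2 b x y : Z) : MN (a1, 0) (a2, b) (x, y) -> NS2 a1 a2 x.
Proof.
  intros [c1 [c2 [hc1 [hc2 [ex _]]]]]%MN_iff.
  exists c1, c2. auto.
Qed.

Section Template.

Variables a1 a2 b c : Z.
Hypotheses (a1_gt0 : 0 < a1) (a2_gt0 : 0 < a2) (b_ge0 : 0 <= b)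
  (chi_c : is_chi a1 a2 c).

Lemma MN_above_corner (x y : Z) :
  c <= x -> c + b * (a1 - 1) <= y -> MN (a1, 0) (a2, b) (x, y).
Proof.
  intros hx hy. apply MN_iff.
  destruct (NS2_reduced_repr a1 a2 x a1_gt0 (Z.lt_le_incl _ _ a2_gt0) (is_chi_conductor a1 a2 c chi_c x hx))
    as [c1 [c2 [hc1 [hc2 ex]]]].
  exists c1, c2. repeat split; try lia.
  apply (is_chi_conductor a1 a2 c chi_c). nia.
Qed.

Hypothesis coprime_a12 : Z.gcd a1 a2 = 1.

Lemma MN_not_gap (k : Z) :
  ~ MN (a1, 0) (a2, b) (k * a1 + (a1 - 1) * a2, c - 1 + b * (a1 - 1)).
Proof.
  intros [c1 [c2 [hc1 [hc2 [ex hy]]]]]%MN_iff.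
  destruct (coprime_repr_congr a1 a2 c1 c2 k (a1 - 1) coprime_a12 (eq_sym ex))
    as [t ht].
  assert (ht0 : 0 <= t) by nia.
  apply (is_chi_gap a1 a2 c a1_gt0 a2_gt0 chi_c).
  replace (c - 1) with (c - 1 + b * (a1 - 1) - b * c2 + (b * t) * a1) by nia.
  apply NS2_add_mull; [nia | exact hy].
Qed.

Lemma Frob_fst_ge (w1 w2 : Z) : Frob (a1, 0) (a2, b) (w1, w2) -> c <= w1.
Proof.
  intros hF. apply (is_chi_least a1 a2 c chi_c).
  - apply (NS2_nonneg a1 a2); try lia.
    apply (MN_fst_NS2 a1 a2 b w1 w2).
    replace (w1, w2) with (radd (w1, w2) (0, 0)) by (unfold radd; simpl; f_equal; lia).
    apply hF. split; simpl; lia.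
  - intros v hv. apply (MN_fst_NS2 a1 a2 b v w2).
    replace (v, w2) with (radd (w1, w2) (v - w1, 0)) by (unfold radd; simpl; f_equal; lia).
    apply hF. split; simpl; lia.
Qed.

Lemma Frob_snd_ge (w1 w2 : Z) :
  Frob (a1, 0) (a2, b) (w1, w2) -> c + b * (a1 - 1) <= w2.
Proof.
  intros hF. pose proof (Frob_fst_ge w1 w2 hF) as hw1.
  destruct chi_c as [hc0 _].
  apply Z.nlt_ge. intros hlt.
  apply (MN_not_gap w1).
  set (x := w1 * a1 + (a1 - 1) * a2).
  set (y := c - 1 + b * (a1 - 1)).
  replace (x, y) with (radd (w1, w2) (x - w1, y - w2)) by (unfold radd; simpl; f_equal; lia).
  apply hF. split; simpl; unfold x, y; nia.
Qed.

Lemma Frob_iff_corner (w1 w2 : Z) :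
  Frob (a1, 0) (a2, b) (w1, w2) <-> c <= w1 /\ c + b * (a1 - 1) <= w2.
Proof.
  split.
  - intros hF. split; [exact (Frob_fst_ge w1 w2 hF) | exact (Frob_snd_ge w1 w2 hF)].
  - intros [hw1 hw2] [n1 n2] [hn1 hn2]; simpl in *.
    unfold radd; simpl. apply MN_above_corner; lia.
Qed.

End Template.

Theorem proposition4p5 (a1 a2 b c : Z) :
  0 < a1 -> 0 < a2 -> Z.gcd a1 a2 = 1 -> 0 <= b ->
  is_chi a1 a2 c ->
  forall w : RZ,
    Frob (a1, 0) (a2, b) w <->
    exists n : RZ, inN2 n /\ w = radd (c, c + b * (a1 - 1)) n.
Proof.
  intros h1 h2 hg hb hchi [w1 w2].
  rewrite (Frob_iff_corner a1 a2 b c h1 h2 hb hchi hg).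
  unfold inN2, radd; simpl. split.
  - intros [hw1 hw2].
    exists (w1 - c, w2 - (c + b * (a1 - 1))); simpl.
    split; [lia | f_equal; lia].
  - intros [[n1 n2] [[hn1 hn2] e]]; simpl in *.
    injection e as -> ->. lia.
Qed.
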